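(* Let $H$ be the simple graph with vertex set $\{A,B,C,D,E,F,G\}$ and edge set $\{AC, AD, AE, AF, AG, BD, BE, CE, CF, CG, DE, DG, EG\}$. Then any graph containing an induced subgraph isomorphic to $H$ is not a divisor graph.
   Context: For a nonempty set $S$ of positive integers, the divisor graph $G(S)$ has vertex set $S$, with distinct $i,j$ adjacent iff $i\mid j$ or $j\mid i$. A graph is a divisor graph if it is isomorphic to $G(S)$ for some nonempty set $S$ of positive integers. *)

From mathcomp Require Import all_boot.
Set Implicit Arguments. Unset Strict Implicit. Unset Printing Implicit Defensive.

(* Vertices A,B,C,D,E,F,G of H are encoded as 0,1,2,3,4,5,6 in 'I_7. *)
Definition H_edges : seq (nat * nat) :=
  [:: (0,2); (0,3); (0,4); (0,5); (0,6); (1,3); (1,4); (2,4); (2,5); (2,6);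
      (3,4); (3,6); (4,6)].

Definition H_adj (i j : 'I_7) : bool :=
  ((i : nat, j : nat) \in H_edges) || ((j : nat, i : nat) \in H_edges).

Definition simple_graph (V : Type) (adj : V -> V -> Prop) : Prop :=
  (forall u v, adj u v -> adj v u) /\ (forall v, ~ adj v v).

Definition divisor_adj (i j : nat) : Prop := i <> j /\ (i %| j \/ j %| i).

Definition is_divisor_graph (V : Type) (adj : V -> V -> Prop) : Prop :=
  exists S : nat -> Prop,
    (exists s, S s) /\ (forall s, S s -> 0 < s) /\
    exists f : V -> nat,
      injective f /\ (forall s, S s <-> exists v, f v = s) /\
      (forall u v, adj u v <-> divisor_adj (f u) (f v)).

Definition has_induced_H (V : Type) (adj : V -> V -> Prop) : Prop :=
  exists f : 'I_7 -> V, injective f /\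
    (forall i j, adj (f i) (f j) <-> H_adj i j).

From mathcomp Require Import all_boot.
Set Implicit Arguments. Unset Strict Implicit. Unset Printing Implicit Defensive.

(* Orienting every edge of a divisor graph from the divisor to the multiple
   gives a transitive orientation, so it suffices to show that H admits none.
   In a transitive orientation, two edges u-v and u-w with v, w non-adjacent
   point the same way at u; starting from the edge A-C this forcing propagates
   along A-D, A-F, A-E, B-E, C-E, C-F, C-G, B-D, D-G and orients C-G-D as a
   directed path, which forces the non-edge C-D. *)

Definition comparability_rep (W : eqType) (T : Type) (e : rel W) (R : rel T)
    (x : W -> T) :=
  forall u v, u != v -> e u v = R (x u) (x v) || R (x v) (x u).

Lemma comparability_rep_rev (W : eqType) (T : Type) (e : rel W) (R : rel T)
    (x : W -> T) :
  comparability_rep e R x -> comparability_rep e (fun a b => R b a) x.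
Proof. by move=> repx u v uv; rewrite repx // orbC. Qed.

Lemma forced_out (T : Type) (R : rel T) (y z w : T) :
  transitive R -> R y z -> R y w || R w y -> ~~ R w z -> R y w.
Proof.
move=> trR Ryz /orP[// | Rwy] /negP[]; exact: trR Rwy Ryz.
Qed.

Lemma forced_in (T : Type) (R : rel T) (y z w : T) :
  transitive R -> R z y -> R w y || R y w -> ~~ R z w -> R w y.
Proof. by move/rev_trans; apply: forced_out. Qed.

Lemma H_not_comparability_graph (T : Type) (R : rel T) (x : 'I_7 -> T) :
  transitive R -> ~ comparability_rep H_adj R x.
Proof.
pose A := @Ordinal 7 0 isT; pose B := @Ordinal 7 1 isT.
pose C := @Ordinal 7 2 isT; pose D := @Ordinal 7 3 isT.
pose E := @Ordinal 7 4 isT; pose F := @Ordinal 7 5 isT.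
pose G := @Ordinal 7 6 isT.
move=> trR repx.
wlog RAC : R trR repx / R (x A) (x C).
  move=> oriented.
  have /orP[|RCA] : R (x A) (x C) || R (x C) (x A) by rewrite -repx.
    exact: oriented.
  exact: (oriented _ (rev_trans trR) (comparability_rep_rev repx)).
have comp i j : i != j -> H_adj i j -> R (x i) (x j) || R (x j) (x i).
  by move=> ij; rewrite repx.
have incomp i j : i != j -> ~~ H_adj i j -> ~~ R (x i) (x j).
  by move=> ij; rewrite repx // negb_or => /andP[].
have RAD := forced_out trR RAC (comp A D isT isT) (incomp D C isT isT).
have RAF := forced_out trR RAD (comp A F isT isT) (incomp F D isT isT).
have RAE := forced_out trR RAF (comp A E isT isT) (incomp E F isT isT).
have RBE := forced_in trR RAE (comp B E isT isT) (incomp A B isT isT).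
have RCE := forced_in trR RBE (comp C E isT isT) (incomp B C isT isT).
have RCF := forced_out trR RCE (comp C F isT isT) (incomp F E isT isT).
have RCG := forced_out trR RCF (comp C G isT isT) (incomp G F isT isT).
have RBD := forced_in trR RAD (comp B D isT isT) (incomp A B isT isT).
have RGD := forced_in trR RBD (comp G D isT isT) (incomp B G isT isT).
by move: (incomp C D isT isT); rewrite (trR _ _ _ RCG RGD).
Qed.

Lemma induced_H_divisor_rep (V : Type) (adj : V -> V -> Prop) :
  has_induced_H adj -> is_divisor_graph adj ->
  exists x : 'I_7 -> nat, comparability_rep H_adj dvdn x.
Proof.
move=> [h [h_inj h_adj]] [_ [_ [_ [f [f_inj [_ f_adj]]]]]].
exists (fun i => f (h i)) => u v uv.
have fhuv : f (h u) <> f (h v) by move/f_inj/h_inj/eqP; rewrite (negbTE uv).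
apply/idP/orP => [/h_adj/f_adj[] // | fdvd].
exact/h_adj/f_adj.
Qed.

Theorem lemma2p1 (V : Type) (adj : V -> V -> Prop) :
  simple_graph adj -> has_induced_H adj -> ~ is_divisor_graph adj.
Proof.
move=> _ indH divG.
have [x repx] := induced_H_divisor_rep indH divG.
exact: (H_not_comparability_graph dvdn_trans repx).
Qed.
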